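(* Let $d$ and $q$ be positive integers and let $G$ be a finite (loop-free) graph with maximum degree at most $d$. Put $D := d \cdot \#V(G) - 2 \cdot \#E(G)$. Then there is a $d$-regular graph $G'$ such that (1) $\#V(G') \leq 1 + \max\{3 + D/d,\ 2\lceil d/2 \rceil\} + \#V(G)$, and (2) $\hom(G, H_q) \leq \hom(G', H_q)$.
   Context: $H_q$ is the graph (loops allowed) on vertex set $\{1,2,\dots,q\}$ in which vertices $u,v$ (possibly equal) are adjacent iff $u + v \geq q$. For graphs $G, H$, $\hom(G,H)$ is the number of graph homomorphisms $G \to H$, i.e. maps $\varphi: V(G) \to V(H)$ such that $xy \in E(G)$ implies $\varphi(x)\varphi(y) \in E(H)$. *)

From mathcomp Require Import all_boot all_order all_algebra.
Set Implicit Arguments. Unset Strict Implicit. Unset Printing Implicit Defensive.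

Definition simple_graph (n : nat) (e : rel 'I_n) : Prop :=
  (forall x y, e x y = e y x) /\ (forall x, ~~ e x x).

Definition degree (n : nat) (e : rel 'I_n) (v : 'I_n) : nat := #|[set w | e v w]|.

Definition nedges (n : nat) (e : rel 'I_n) : nat :=
  #|[set p : 'I_n * 'I_n | (val p.1 < val p.2) && e p.1 p.2]|.

Definition regular (d n : nat) (e : rel 'I_n) : Prop :=
  forall v, degree e v = d.

(* H_q on {1,...,q}: vertex i : 'I_q stands for i+1; u ~ v iff u + v >= q
   (loops allowed). *)
Definition Hq_adj (q : nat) : rel 'I_q := fun i j => q <= i.+1 + j.+1.

Definition hom_Hq (n : nat) (e : rel 'I_n) (q : nat) : nat :=
  #|[set f : {ffun 'I_n -> 'I_q} |
      [forall x, forall y, e x y ==> Hq_adj (f x) (f y)]]|.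

From mathcomp Require Import all_boot all_order all_algebra.
From mathcomp Require Import zify.
Import Order.TTheory GRing.Theory Num.Theory.

(* Add m new vertices, indexed by Z/m.  An old vertex u still misses
   d - deg u edges; number all these missing edge-ends ("stubs") consecutively
   and join stub j to the new vertex j mod m.  As d < m no vertex is joined
   twice, and every new vertex receives D/m or D/m + 1 stubs, D being the total
   defect.  It remains to put, on the new vertices, a graph where r = D mod m
   vertices have degree c - 1 and the others degree c = d - D/m; a circulant
   graph toggled along a perfect matching of an interval does it, provided
   c m - r is even, which the handshake lemma gives once n + m is even for odd d.
   Some m <= max(1 + 2 ceil(d/2), 4 + floor(D/d)) satisfies d < m, D < d m and
   this parity condition, which gives the size bound.
   Sending all new vertices to the vertex q of H_q, adjacent to everything,
   embeds Hom(G, H_q) into Hom(G', H_q). *)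

Set Implicit Arguments.
Unset Strict Implicit.
Unset Printing Implicit Defensive.

Lemma card_sum_mem (T : finType) (A : {pred T}) : #|A| = \sum_x (x \in A : nat).
Proof. by rewrite -sum1_card big_mkcond; apply: eq_bigr => x _; case: (x \in A). Qed.

Lemma card_set_sum (T : finType) (P : pred T) : #|[set x | P x]| = \sum_x (P x : nat).
Proof. by rewrite card_sum_mem; apply: eq_bigr => x _; rewrite inE. Qed.

Lemma sum_ord_itv m a b : \sum_(k < m) ((a <= k < b) : nat) = minn b m - minn a m.
Proof. by elim: m => [|m IHm]; rewrite ?big_ord0 ?big_ord_recr /= ?IHm; lia. Qed.

Lemma sum_addb (T : finType) (P Q : pred T) :
  \sum_x (P x (+) Q x : nat) + 2 * \sum_x (P x && Q x : nat)
    = \sum_x (P x : nat) + \sum_x (Q x : nat).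
Proof.
rewrite big_distrr -!big_split; apply: eq_bigr => x _ /=.
by case: (P x); case: (Q x).
Qed.

Lemma split_lshift m n (i : 'I_m) : split (lshift n i) = inl i.
Proof. exact: (unsplitK (inl i)). Qed.

Lemma split_rshift m n (i : 'I_n) : split (rshift m i) = inr i.
Proof. exact: (unsplitK (inr i)). Qed.

Lemma degreeE n (e : rel 'I_n) v : degree e v = \sum_w (e v w : nat).
Proof. exact: card_set_sum. Qed.

Lemma handshake n (e : rel 'I_n) : simple_graph e -> \sum_v degree e v = 2 * nedges e.
Proof.
case=> e_sym e_irr; rewrite /nedges card_set_sum.
under eq_bigr do rewrite degreeE.
rewrite pair_big /= mul2n -addnn.
have swap_inj : injective (fun p : 'I_n * 'I_n => (p.2, p.1)) by move=> [? ?] [? ?] [-> ->].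
rewrite [X in _ = _ + X](reindex_inj swap_inj) -big_split /=; apply: eq_bigr => -[x y] _ /=.
rewrite (e_sym y x); case: (ltngtP x y) => [_|_|/val_inj ->] /=.
- by rewrite addn0.
- by [].
- by rewrite (negbTE (e_irr y)).
Qed.

Lemma nedges_le n (e : rel 'I_n) d :
  simple_graph e -> (forall v, degree e v <= d) -> 2 * nedges e <= d * n.
Proof.
move=> /handshake <- e_deg; apply: (@leq_trans (\sum_(v < n) d)); first exact: leq_sum.
by rewrite sum_nat_const card_ord mulnC.
Qed.

Lemma sum_degree_defect n (e : rel 'I_n) d : simple_graph e -> (forall v, degree e v <= d) ->
  \sum_v (d - degree e v) = d * n - 2 * nedges e.
Proof.
move=> e_simple e_deg; rewrite -handshake //.
suff : \sum_v (d - degree e v) + \sum_v degree e v = d * n by lia.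
rewrite -big_split /= (eq_bigr (fun=> d)) => [|v _]; last by rewrite subnK.
by rewrite sum_nat_const card_ord mulnC.
Qed.

Definition edge_xor n (e f : rel 'I_n) : rel 'I_n := fun x y => e x y (+) f x y.

Lemma edge_xor_simple n (e f : rel 'I_n) :
  simple_graph e -> simple_graph f -> simple_graph (edge_xor e f).
Proof.
move=> [e_sym e_irr] [f_sym f_irr]; split=> [x y|x]; rewrite /edge_xor.
  by rewrite e_sym f_sym.
by rewrite (negbTE (e_irr x)) (negbTE (f_irr x)).
Qed.

Lemma degree_edge_xor n (e f : rel 'I_n) v :
  degree (edge_xor e f) v + 2 * \sum_w (e v w && f v w : nat) = degree e v + degree f v.
Proof. by rewrite !degreeE; exact: sum_addb. Qed.

Section Glue.
Variables (n m : nat) (e : rel 'I_n) (B : 'I_n -> 'I_m -> bool) (f : rel 'I_m).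

Definition glue : rel 'I_(n + m) := fun x y =>
  match split x, split y with
  | inl u, inl v => e u v
  | inl u, inr w | inr w, inl u => B u w
  | inr w, inr w' => f w w'
  end.

Lemma glue_simple : simple_graph e -> simple_graph f -> simple_graph glue.
Proof.
move=> [e_sym e_irr] [f_sym f_irr]; split=> [x y|x]; rewrite /glue.
  by case: (split x) => ?; case: (split y).
by case: (split x).
Qed.

Lemma degree_glue_lshift u :
  degree glue (lshift m u) = degree e u + \sum_w (B u w : nat).
Proof.
rewrite !degreeE big_split_ord /glue split_lshift.
by congr (_ + _); apply: eq_bigr => v _; rewrite ?split_lshift ?split_rshift.
Qed.

Lemma degree_glue_rshift w :
  degree glue (rshift n w) = \sum_u (B u w : nat) + degree f w.
Proof.
rewrite !degreeE big_split_ord /glue split_rshift.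
by congr (_ + _); apply: eq_bigr => v _; rewrite ?split_lshift ?split_rshift.
Qed.

Lemma regular_glue d :
  (forall u, degree e u + \sum_w (B u w : nat) = d) ->
  (forall w, \sum_u (B u w : nat) + degree f w = d) -> regular d glue.
Proof.
move=> deg_l deg_r x; rewrite -(splitK x).
by case: (split x) => [u|w] /=; rewrite ?degree_glue_lshift ?degree_glue_rshift.
Qed.

Lemma hom_Hq_glue q : 0 < q -> hom_Hq e q <= hom_Hq glue q.
Proof.
case: q => // q' _; set top : 'I_q'.+1 := ord_max.
pose ext (g : {ffun 'I_n -> 'I_q'.+1}) : {ffun 'I_(n + m) -> 'I_q'.+1} :=
  [ffun x => if split x is inl u then g u else top].
have ext_inj : injective ext.
  move=> g1 g2 /ffunP eq_g; apply/ffunP => u.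
  by have := eq_g (lshift m u); rewrite !ffunE split_lshift.
rewrite /hom_Hq -(card_imset _ ext_inj); apply/subset_leq_card/subsetP => h.
case/imsetP=> g; rewrite inE => /forallP g_hom -> {h}; rewrite inE.
apply/forallP => x; apply/forallP => y; apply/implyP; rewrite /glue !ffunE /Hq_adj.
case: (split x) => [u|w]; case: (split y) => [v|w'] /=; try lia.
by move=> euv; have /forallP/(_ v)/implyP := g_hom u; apply.
Qed.

End Glue.

Section Cyclic.
Variable p' : nat.
Local Notation m := p'.+1.
Implicit Types (x y z w : 'I_m) (K : {set 'I_m}).

Lemma val_Zp_sub x y : val (x - y)%R = if y <= x then x - y else x + m - y.
Proof.
have xm := ltn_ord x; have ym := ltn_ord y.
rewrite /= modnDmr; case: (leqP y x) => yx.
  have -> : x + (m - y) = x - y + m by lia.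
  by rewrite modnDr modn_small; lia.
by rewrite modn_small; lia.
Qed.

Lemma val_Zp_opp z : z != 0%R -> val (- z)%R = m - z.
Proof. by move=> z0; rewrite -[(- z)%R]add0r val_Zp_sub leqn0 ifN. Qed.

Lemma val_inZp k : val (inZp k : 'I_m) = k %% m.
Proof. by []. Qed.

Lemma inZpD a b : inZp (a + b) = (inZp a + inZp b)%R :> 'I_m.
Proof. by apply: val_inj; rewrite /= modnDm. Qed.

Lemma sum_Zp_shift (F : 'I_m -> nat) x : \sum_y F (y - x)%R = \sum_y F y.
Proof. by rewrite [RHS](reindex_inj (addIr (- x)%R)). Qed.

Definition circulant (K : {set 'I_m}) : rel 'I_m := fun x y => (y - x)%R \in K.

Lemma circulant_simple K :
  0%R \notin K -> (forall z, ((- z)%R \in K) = (z \in K)) -> simple_graph (circulant K).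
Proof. by move=> K0 K_opp; split=> [x y|x]; rewrite /circulant ?subrr // -opprB K_opp. Qed.

Lemma degree_circulant K x : degree (circulant K) x = #|K|.
Proof.
rewrite degreeE (sum_Zp_shift (fun z => (z \in K : nat))).
by rewrite card_sum_mem.
Qed.

Definition band lo hi (h : bool) : {set 'I_m} :=
  [set z : 'I_m | [|| lo <= z <= hi, lo <= m - z <= hi | h && (2 * z == m)]].

Lemma band_opp lo hi h z : ((- z)%R \in band lo hi h) = (z \in band lo hi h).
Proof.
have [->|z0] := eqVneq z 0%R; first by rewrite oppr0.
have zm := ltn_ord z; have z_gt0 : 0 < z by rewrite lt0n.
by rewrite !inE val_Zp_opp //; lia.
Qed.

Lemma band0 lo hi h : 0 < lo -> hi < m -> 0%R \notin band lo hi h.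
Proof. by rewrite inE /=; lia. Qed.

Lemma card_band lo hi (h : bool) : 0 < lo -> lo <= hi.+1 -> 2 * hi < m ->
  (h -> ~~ odd m) -> #|band lo hi h| = 2 * (hi.+1 - lo) + h.
Proof.
move=> lo_gt0 lo_hi hi_m m_even; rewrite card_set_sum.
have m_half : h -> 2 * m./2 = m.
  by move/m_even => /negbTE m_ev; rewrite -[RHS]odd_double_half m_ev mul2n.
clear m_even.
have band_split (k : 'I_m) :
  ([|| lo <= k <= hi, lo <= m - k <= hi | h && (2 * k == m)] : nat)
    = (lo <= k < hi.+1) + (m - hi <= k < (m - lo).+1) + (h && (m./2 <= k < m./2.+1)).
  by have := ltn_ord k; case: h m_half => [/(_ isT)|_] /=; lia.
rewrite (eq_bigr _ (fun k _ => band_split k)) !big_split /= !sum_ord_itv {band_split}.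
case: h m_half => [/(_ isT)|_] /=; first by rewrite sum_ord_itv; lia.
by rewrite big1 //; lia.
Qed.

Lemma Zp_sub_succ x y : y = x.+1 :> nat -> (y - x)%R = inZp 1.
Proof.
move=> yx; have ym := ltn_ord y; apply: val_inj.
by rewrite val_Zp_sub yx leqnSn subSnn val_inZp modn_small //; lia.
Qed.

Definition pairing a b : rel 'I_m := fun x y =>
  [&& a <= x < b, a <= y < b, (x - a)./2 == (y - a)./2 & x != y :> nat].

Lemma pairing_simple a b : simple_graph (pairing a b).
Proof. by split=> [x y|x]; rewrite /pairing; lia. Qed.

Lemma pairing_step a b x y : pairing a b x y -> (y - x = inZp 1 \/ y - x = - inZp 1)%R.
Proof.
rewrite /pairing => xy; have [yx|xy'] : y = x.+1 :> nat \/ x = y.+1 :> nat by lia.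
  by left; apply: Zp_sub_succ.
by right; rewrite -opprB Zp_sub_succ.
Qed.

Lemma sum_pairing a b x : b <= m -> ~~ odd (b - a) ->
  \sum_y (pairing a b x y : nat) = (a <= x < b).
Proof.
move=> bm ab_even; pose y0 := if odd (x - a) then x.-1 else x.+1.
rewrite (eq_bigr (fun y : 'I_m => (a <= x < b) * (y0 <= y < y0.+1))); last first.
  by move=> y _; rewrite /pairing /y0; case: ifP; lia.
by rewrite -big_distrr /= sum_ord_itv /y0; have := ltn_ord x; case: ifP; lia.
Qed.

Lemma degree_circulant_xor_pairing K a b x :
    b <= m -> ~~ odd (b - a) -> (forall z, ((- z)%R \in K) = (z \in K)) ->
  degree (edge_xor (circulant K) (pairing a b)) x + 2 * ((a <= x < b) && (inZp 1 \in K))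
    = #|K| + (a <= x < b).
Proof.
move=> bm ab_even K_opp.
have common : \sum_y (circulant K x y && pairing a b x y : nat)
    = (inZp 1 \in K) * (a <= x < b).
  rewrite -sum_pairing // big_distrr /=; apply: eq_bigr => y _.
  case xy: (pairing a b x y); rewrite ?andbF ?muln0 // andbT muln1 /circulant.
  by case: (pairing_step xy) => ->; rewrite ?K_opp.
have := degree_edge_xor (circulant K) (pairing a b) x.
by rewrite common degree_circulant [degree (pairing a b) x]degreeE sum_pairing //; lia.
Qed.

Lemma band_xor_pairing_simple lo hi h a b : 0 < lo -> hi < m ->
  simple_graph (edge_xor (circulant (band lo hi h)) (pairing a b)).
Proof.
move=> lo_gt0 hi_m; apply: edge_xor_simple (pairing_simple a b).
by apply: circulant_simple; [exact: band0 | exact: band_opp].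
Qed.

Lemma degree_band_xor_pairing lo hi (h : bool) a b x : 2 < m ->
    0 < lo -> lo <= hi.+1 -> 2 * hi < m -> (h -> ~~ odd m) -> b <= m -> ~~ odd (b - a) ->
  degree (edge_xor (circulant (band lo hi h)) (pairing a b)) x
    = 2 * (hi.+1 - lo) + h + (a <= x < b) - 2 * ((a <= x < b) && (lo <= 1 <= hi)).
Proof.
move=> m_gt2 lo_gt0 lo_hi hi_m m_even b_m ab_even; rewrite -card_band //.
have := degree_circulant_xor_pairing x b_m ab_even (band_opp lo hi h).
by rewrite inE val_inZp modn_small //; lia.
Qed.

(* If r is odd or c = 1 (so c is odd), add a matching on [r, m) to a
   (c - 1)-regular circulant avoiding distance 1; otherwise remove a matching
   on [0, r) from a c-regular circulant containing distance 1. *)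
Lemma near_regular_graph c r : 2 < m -> 0 < c < m -> r < m -> odd (c * m) = odd r ->
  exists f : rel 'I_m, simple_graph f /\ forall x, degree f x = c - (x < r).
Proof.
move=> m_gt2 /andP [c_gt0 c_m] r_m; rewrite oddM => parity.
case: (boolP (odd r || (c == 1))) => [c_odd_case|c_even_case].
  exists (edge_xor (circulant (band 2 c./2.+1 false)) (pairing r m)).
  split=> [|x]; first by apply: band_xor_pairing_simple; lia.
  by have := ltn_ord x; rewrite degree_band_xor_pairing; lia.
exists (edge_xor (circulant (band 1 c./2 (odd c))) (pairing 0 r)).
split=> [|x]; first by apply: band_xor_pairing_simple; lia.
by rewrite degree_band_xor_pairing; lia.
Qed.

Lemma Zp_sub_ltn_sum P l w : l <= m ->
  (val (w - inZp P)%R < l : nat) = \sum_(P <= j < P + l) (inZp j == w).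
Proof.
elim: l => [|l IHl] l_m; first by rewrite addn0 big_geq.
rewrite addnS big_nat_recr ?leq_addr // -IHl ?(ltnW l_m) //.
have -> : (inZp (P + l) == w) = (val (w - inZp P)%R == l).
  rewrite eq_sym inZpD addrC -subr_eq -val_eqE.
  by rewrite val_inZp modn_small.
by set k := val (w - inZp P)%R; rewrite /=; lia.
Qed.

Lemma sum_residue D w :
  \sum_(0 <= j < D) (inZp j == w :> 'I_m) = D %/ m + (w < D %% m).
Proof.
elim: D => [|D IHD]; first by rewrite big_geq // div0n mod0n.
rewrite big_nat_recr // IHD divnS // modnS -val_eqE val_inZp /=.
have D_m := ltn_pmod D (ltn0Sn p').
have -> : (m %| D.+1) = ((D %% m).+1 == m).
  rewrite /dvdn -addn1 -modnDml addn1.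
  have [lt|->] : (D %% m).+1 < m \/ (D %% m).+1 = m by lia.
    by rewrite modn_small //; lia.
  by rewrite modnn !eqxx.
have := ltn_ord w; move: (D %% m) (D %/ m) D_m => r q r_m w_m.
by case: eqP => /=; case: ifP; lia.
Qed.

End Cyclic.

Section Stubs.
Variables (p' : nat) (df : nat -> nat).
Local Notation m := p'.+1.

Definition stub_start u := \sum_(0 <= i < u) df i.

(* Vertex u owns the stubs stub_start u <= j < stub_start u.+1, and stub j is
   attached to the new vertex j mod m. *)
Definition stub u (w : 'I_m) := val (w - inZp (stub_start u))%R < df u.

Lemma sum_stub_row u : df u <= m -> \sum_w (stub u w : nat) = df u.
Proof.
move=> df_m; rewrite (sum_Zp_shift (fun z : 'I_m => (val z < df u : nat))).
by rewrite (eq_bigr (fun z : 'I_m => (0 <= z < df u : nat))) // sum_ord_itv; lia.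
Qed.

Lemma sum_stub_col N (w : 'I_m) : (forall u, u < N -> df u <= m) ->
  \sum_(0 <= u < N) (stub u w : nat) = \sum_(0 <= j < stub_start N) (inZp j == w).
Proof.
elim: N => [|N IHN] df_m; first by rewrite /stub_start !big_geq.
rewrite big_nat_recr // IHN => [|u u_N]; last by apply: df_m; lia.
rewrite /stub_start big_nat_recr // [RHS](@big_cat_nat _ _ _ (stub_start N)) ?leq_addr //.
by rewrite /stub Zp_sub_ltn_sum ?df_m.
Qed.

End Stubs.

Lemma exists_padding_size d n D : 0 < d ->
  exists m, [/\ 2 < m, d < m, D %/ d < m, m <= maxn (1 + 2 * uphalf d) (4 + D %/ d)
              & odd d -> ~~ odd (n + m)].
Proof.
move=> d_gt0; rewrite uphalfE; move: (D %/ d) => q.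
have [M M_def] : {M | M = maxn (1 + 2 * d.+1./2) (4 + q)}.
  by exists (maxn (1 + 2 * d.+1./2) (4 + q)).
rewrite -M_def; case: (boolP (odd d && odd (n + M))) => par.
  by exists M.-1; split; lia.
by exists M; split; lia.
Qed.

Lemma padding_parity d n m E : 0 < m -> 2 * E <= d * n -> (d * n - 2 * E) %/ m <= d ->
    (odd d -> ~~ odd (n + m)) ->
  odd ((d - (d * n - 2 * E) %/ m) * m) = odd ((d * n - 2 * E) %% m).
Proof.
move=> m_gt0 E_le s_le par; have := divn_eq (d * n - 2 * E) m.
move: ((d * n - 2 * E) %/ m) ((d * n - 2 * E) %% m) s_le => s r s_le D_eq.
have : (d - s) * m + d * n = d * m + r + 2 * E.
  have : s * m <= d * m by rewrite leq_mul2r s_le orbT.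
  by rewrite mulnBl; move: D_eq E_le; move: (s * m) (d * m) (d * n) => sm dm dn; lia.
move/(congr1 odd); rewrite !oddD !oddM /=.
have -> : odd d && odd n = odd d && odd m.
  by case: (odd d) par => // /(_ isT); rewrite oddD; case: (odd n); case: (odd m).
by rewrite addbF addbb addbF [X in X = _]addbC => /addbI.
Qed.

Lemma exists_regular_padding n (e : rel 'I_n) d p' :
    simple_graph e -> (forall v, degree e v <= d) -> 2 < p'.+1 -> d < p'.+1 ->
    d * n - 2 * nedges e < d * p'.+1 -> (odd d -> ~~ odd (n + p'.+1)) ->
  exists B f, simple_graph (@glue n p'.+1 e B f) /\ regular d (glue e B f).
Proof.
set m := p'.+1; set D := d * n - 2 * nedges e => e_simple e_deg m_gt2 d_m D_lt m_par.
pose df i := oapp (fun u : 'I_n => d - degree e u) 0 (insub i).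
have df_val (u : 'I_n) : df u = d - degree e u by rewrite /df valK.
have df_m i : df i <= m.
  by rewrite /df; case: insub => //= u; exact: leq_trans (leq_subr _ _) (ltnW d_m).
have stubs_D : stub_start df n = D.
  rewrite /stub_start big_mkord /D -(sum_degree_defect e_simple e_deg).
  by apply: eq_bigr => u _; rewrite df_val.
have Dm_d : D %/ m < d by rewrite ltn_divLR.
have [f [f_simple f_deg]] : exists f : rel 'I_m,
    simple_graph f /\ forall x, degree f x = d - D %/ m - (x < D %% m).
  apply: near_regular_graph => //.
  - by rewrite subn_gt0 Dm_d (leq_ltn_trans (leq_subr _ _) d_m).
  - exact: ltn_pmod.
  - by apply: padding_parity => //; [exact: nedges_le | exact: ltnW].
exists (fun u => stub df u), f; split; first exact: glue_simple.
apply: regular_glue => [u|w]; first by rewrite sum_stub_row // df_val subnKC.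
rewrite -(big_mkord xpredT (fun u => stub df u w : nat)) sum_stub_col // stubs_D.
by rewrite sum_residue -/m f_deg; move: (D %/ m) (D %% m) Dm_d => s r; lia.
Qed.

Local Open Scope ring_scope.

Lemma padding_size_bound d D m : (0 < d)%N -> (m <= maxn (1 + 2 * uphalf d) (4 + D %/ d))%N ->
  (m%:R : rat) <= 1 + Num.max (3 + D%:R / d%:R) (2 * (uphalf d)%:R).
Proof.
move=> d_gt0; rewrite -(ler_nat rat) => /le_trans; apply.
case: (leqP (4 + D %/ d) (1 + 2 * uphalf d))%N => cmp.
  by rewrite natrD natrM lerD2l le_max lexx orbT.
rewrite natrD -[4%:R]/(1 + 3 : rat) -addrA lerD2l.
rewrite le_max lerD2l; apply/orP; left.
by rewrite ler_pdivlMr ?ltr0n // -natrM ler_nat leq_divM.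
Qed.

Theorem lemma3p4 (d q n : nat) (e : rel 'I_n) :
  (0 < d)%N -> (0 < q)%N ->
  simple_graph e ->
  (forall v, (degree e v <= d)%N) ->
  exists (n' : nat) (e' : rel 'I_n'),
    [/\ simple_graph e', regular d e',
        (n'%:R : rat) <=
          1 + Num.max (3 + (d * n - 2 * nedges e)%N%:R / d%:R) (2 * (uphalf d)%:R)
            + n%:R
      & (hom_Hq e q <= hom_Hq e' q)%N].
Proof.
move=> d_gt0 q_gt0 e_simple e_deg.
have [[|p'] [m_gt2 d_m Dd_m m_le m_par]] :=
  exists_padding_size n (d * n - 2 * nedges e) d_gt0; first by [].
have D_lt : (d * n - 2 * nedges e < d * p'.+1)%N by rewrite [(d * p'.+1)%N]mulnC -ltn_divLR.
have [B [f [G'_simple G'_regular]]] := exists_regular_padding e_simple e_deg m_gt2 d_m D_lt m_par.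
exists (n + p'.+1)%N, (glue e B f); split => //.
  by rewrite natrD addrC lerD2r; apply: padding_size_bound.
exact: hom_Hq_glue.
Qed.
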